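(* Let $A$ be a Hopf algebra over a field $k$ admitting a Haar measure, and let $Z$ be an $A$-Galois extension. Then there exists a unique Haar measure on $Z$.
   Context: An $A$-Galois extension is a nonzero left $A$-comodule algebra $Z$ (coaction $\alpha_Z:Z\to A\otimes Z$ an algebra morphism) such that $(1_A\otimes m_Z)\circ(\alpha_Z\otimes 1_Z):Z\otimes Z\to A\otimes Z$ is bijective. A Haar measure on $Z$ is a linear map $\mu:Z\to k$ with $(1_A\otimes\mu)\circ\alpha_Z=u_A\circ\mu$ (where $u_A:k\to A$ is the unit) and $\mu(1_Z)=1$. A Haar measure on $A$ is a Haar measure on $A$ viewed as an $A$-Galois extension via $\Delta$, i.e. a linear $J:A\to k$ with $(1_A\otimes J)\Delta=u_A\circ J$ and $J(1)=1$. *)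

(* There is no tensor-product / Hopf-algebra library, so we
   encode (possibly infinite-dimensional) tensor products U (x) V over k by
   their standard construction: formal finite sums of pure tensors, i.e.
   sequences of pairs (concatenation = addition), modulo the congruence
   generated by commutativity of the sum and the bilinearity relations. *)
From HB Require Import structures.
From mathcomp Require Import all_boot all_order all_algebra.
Set Implicit Arguments. Unset Strict Implicit. Unset Printing Implicit Defensive.
Import GRing.Theory.
Local Open Scope ring_scope.

Inductive fcong (T : Type) (R : seq T -> seq T -> Prop) : seq T -> seq T -> Prop :=
| fc_gen s t : R s t -> fcong R s t
| fc_refl s : fcong R s s
| fc_sym s t : fcong R s t -> fcong R t s
| fc_trans s t u : fcong R s t -> fcong R t u -> fcong R s u
| fc_cat s s' t t' : fcong R s s' -> fcong R t t' -> fcong R (s ++ t) (s' ++ t')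
| fc_comm s t : fcong R (s ++ t) (t ++ s).

Section Tensors.
Variable k : fieldType.

Inductive tens2_rel (U V : lmodType k) : seq (U * V) -> seq (U * V) -> Prop :=
| t2_addl u u' v : tens2_rel [:: (u + u', v)] [:: (u, v); (u', v)]
| t2_addr u v v' : tens2_rel [:: (u, v + v')] [:: (u, v); (u, v')]
| t2_scale (c : k) u v : tens2_rel [:: (c *: u, v)] [:: (u, c *: v)]
| t2_zero v : tens2_rel [:: (0, v)] [::].

Definition teq2 (U V : lmodType k) := fcong (@tens2_rel U V).

Inductive tens3_rel (U V W : lmodType k) :
  seq (U * V * W) -> seq (U * V * W) -> Prop :=
| t3_add1 u u' v w : tens3_rel [:: (u + u', v, w)] [:: (u, v, w); (u', v, w)]
| t3_add2 u v v' w : tens3_rel [:: (u, v + v', w)] [:: (u, v, w); (u, v', w)]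
| t3_add3 u v w w' : tens3_rel [:: (u, v, w + w')] [:: (u, v, w); (u, v, w')]
| t3_scale12 (c : k) u v w : tens3_rel [:: (c *: u, v, w)] [:: (u, c *: v, w)]
| t3_scale23 (c : k) u v w : tens3_rel [:: (u, c *: v, w)] [:: (u, v, c *: w)]
| t3_zero v w : tens3_rel [:: (0, v, w)] [::].

Definition teq3 (U V W : lmodType k) := fcong (@tens3_rel U V W).

Definition tlinear (X U V : lmodType k) (f : X -> seq (U * V)) : Prop :=
  forall (c : k) (x y : X),
    teq2 (f (c *: x + y)) ([seq (c *: p.1, p.2) | p <- f x] ++ f y).

Definition tmultiplicative (X U V : algType k) (f : X -> seq (U * V)) : Prop :=
  (forall x y : X, teq2 (f (x * y)) [seq (p.1 * q.1, p.2 * q.2) | p <- f x, q <- f y])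
  /\ teq2 (f 1) [:: (1, 1)].

Definition klinear (X : lmodType k) (f : X -> k) : Prop :=
  forall (c : k) (x y : X), f (c *: x + y) = c * f x + f y.

Definition kmultiplicative (X : algType k) (f : X -> k) : Prop :=
  (forall x y : X, f (x * y) = f x * f y) /\ f 1 = 1.

Definition lin_endo (X : lmodType k) (f : X -> X) : Prop :=
  forall (c : k) (x y : X), f (c *: x + y) = c *: f x + f y.

Definition is_hopf_algebra (A : algType k) (Delta : A -> seq (A * A))
    (eps : A -> k) (S : A -> A) : Prop :=
  tlinear Delta /\ tmultiplicative Delta /\
      (* coassociativity: (Delta (x) 1) Delta = (1 (x) Delta) Delta *)
      (forall a : A,
        teq3 [seq (q.1, q.2, p.2) | p <- Delta a, q <- Delta p.1]
             [seq (p.1, q.1, q.2) | p <- Delta a, q <- Delta p.2]) /\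
      (klinear eps /\ kmultiplicative eps) /\
      (forall a : A, \sum_(p <- Delta a) eps p.1 *: p.2 = a
                   /\ \sum_(p <- Delta a) eps p.2 *: p.1 = a) /\
      lin_endo S /\
      (forall a : A, \sum_(p <- Delta a) S p.1 * p.2 = eps a *: 1
                   /\ \sum_(p <- Delta a) p.1 * S p.2 = eps a *: 1).

Definition is_comodule_algebra (A : algType k) (Delta : A -> seq (A * A))
    (eps : A -> k) (Z : algType k) (alpha : Z -> seq (A * Z)) : Prop :=
  [/\ tlinear alpha, tmultiplicative alpha,
      (* (Delta (x) 1) alpha = (1 (x) alpha) alpha *)
      (forall z : Z,
        teq3 [seq (q.1, q.2, p.2) | p <- alpha z, q <- Delta p.1]
             [seq (p.1, q.1, q.2) | p <- alpha z, q <- alpha p.2]) &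
      (forall z : Z, \sum_(p <- alpha z) eps p.1 *: p.2 = z)].

(* the Galois map (1 (x) m_Z)(alpha (x) 1) : Z (x) Z -> A (x) Z on representatives *)
Definition galois_map (A Z : algType k) (alpha : Z -> seq (A * Z))
    (s : seq (Z * Z)) : seq (A * Z) :=
  flatten [seq [seq (q.1, q.2 * p.2) | q <- alpha p.1] | p <- s].

(* A-Galois extension: nonzero comodule algebra with bijective Galois map
   (bijective on tensor classes; Z nonzero is built into algType = nzRing,
   but also stated explicitly) *)
Definition is_galois_extension (A : algType k) (Delta : A -> seq (A * A))
    (eps : A -> k) (Z : algType k) (alpha : Z -> seq (A * Z)) : Prop :=
  [/\ (1 : Z) != 0, is_comodule_algebra Delta eps alpha,
      (forall s t : seq (Z * Z),
          teq2 (galois_map alpha s) (galois_map alpha t) -> teq2 s t) &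
      (forall t : seq (A * Z), exists s : seq (Z * Z), teq2 (galois_map alpha s) t)].

Definition is_haar_measure (A : algType k) (Z : algType k)
    (alpha : Z -> seq (A * Z)) (mu : Z -> k) : Prop :=
  [/\ klinear mu,
      (forall z : Z, \sum_(p <- alpha z) mu p.2 *: p.1 = mu z *: (1 : A)) &
      mu 1 = 1].

End Tensors.

(* Since J is left invariant and the antipode is anti-comultiplicative, J o S is
   a right integral, so P z := (J o S (x) 1)(alpha z) lies in the coinvariants of
   Z and every Haar measure mu satisfies mu (P z) = mu z.  Injectivity of the
   Galois map turns alpha y = 1 (x) y into y (x) 1 = 1 (x) y, on which any two
   normalised functionals agree: this gives uniqueness.  For existence, average
   an arbitrary functional f with f 1 = 1 (obtained by Zorn's lemma) against J:
   z |-> f ((J (x) 1)(alpha z)) is invariant by left invariance of J and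
   coassociativity of alpha. *)

From mathcomp Require Import all_boot all_order all_algebra.
From mathcomp Require Import boolp classical_sets.
Set Implicit Arguments. Unset Strict Implicit. Unset Printing Implicit Defensive.
Import GRing.Theory.
Local Open Scope ring_scope.

Section FormalSums.
Variables (T : Type) (R : seq T -> seq T -> Prop).

Lemma fcong_cons x s t : fcong R s t -> fcong R (x :: s) (x :: t).
Proof. by move=> st; apply: (@fc_cat _ _ [:: x] [:: x]) => //; apply: fc_refl. Qed.

Lemma fcong_flatten (I : Type) (F G : I -> seq T) (r : seq I) :
  (forall i, fcong R (F i) (G i)) ->
  fcong R (flatten (map F r)) (flatten (map G r)).
Proof. by move=> FG; elim: r => [|i r IHr] /=; [apply: fc_refl | apply: fc_cat]. Qed.

Lemma fcong_big (W : nmodType) (F : T -> W) :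
  (forall s t, R s t -> \sum_(x <- s) F x = \sum_(x <- t) F x) ->
  forall s t, fcong R s t -> \sum_(x <- s) F x = \sum_(x <- t) F x.
Proof.
move=> FR s t; elim=> {s t} [|//| | | |].
- exact: FR.
- by move=> s t _ ->.
- by move=> s t u _ -> _ ->.
- by move=> s s' t t' _ Es _ Et; rewrite !big_cat /= Es Et.
- by move=> s t; rewrite !big_cat /= addrC.
Qed.

Lemma fcong_flatten_map (T' : Type) (R' : seq T' -> seq T' -> Prop)
    (h : T -> seq T') :
  (forall s t, R s t -> fcong R' (flatten (map h s)) (flatten (map h t))) ->
  forall s t, fcong R s t -> fcong R' (flatten (map h s)) (flatten (map h t)).
Proof.
move=> hR s t; elim=> {s t}.
- exact: hR.
- by move=> s; apply: fc_refl.
- by move=> s t _; apply: fc_sym.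
- by move=> s t u _ st _; apply: fc_trans st.
- by move=> s s' t t' _ Es _ Et; rewrite !map_cat !flatten_cat; apply: fc_cat.
- by move=> s t; rewrite !map_cat !flatten_cat; apply: fc_comm.
Qed.

Lemma fcong_map (T' : Type) (R' : seq T' -> seq T' -> Prop) (g : T -> T') :
  (forall s t, R s t -> fcong R' (map g s) (map g t)) ->
  forall s t, fcong R s t -> fcong R' (map g s) (map g t).
Proof.
move=> gR s t st; rewrite -(flatten_map1 g s) -(flatten_map1 g t).
by apply: fcong_flatten_map st => s' t'; rewrite !flatten_map1; apply: gR.
Qed.

End FormalSums.

Section LinearFor.
Variables (k : fieldType) (X : lmodType k) (V : zmodType).
Variables (s : GRing.Scale.law k V) (F : X -> V).
Hypothesis linF : linear_for s F.

Lemma linear_forD x y : F (x + y) = F x + F y.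
Proof. exact: (GRing.semilinear_linear linF).2. Qed.

Lemma linear_forZ c x : F (c *: x) = s c (F x).
Proof. exact: (GRing.semilinear_linear linF).1. Qed.

Lemma linear_for0 : F 0 = 0.
Proof. by apply: (@addrI _ (F 0)); rewrite -linear_forD !addr0. Qed.

Lemma linear_for_sum (I : Type) (r : seq I) (G : I -> X) :
  F (\sum_(i <- r) G i) = \sum_(i <- r) F (G i).
Proof.
elim: r => [|i r IHr]; first by rewrite !big_nil linear_for0.
by rewrite !big_cons linear_forD IHr.
Qed.

End LinearFor.

Lemma klinearZ (k : fieldType) (X : lmodType k) (f : X -> k) :
  klinear f -> forall c x, f (c *: x) = c * f x.
Proof. by move=> linf c x; rewrite (linear_forZ linf). Qed.

Section Multilinear.
Variable k : fieldType.

Definition is_bilinear (U V W : lmodType k) (B : U -> V -> W) :=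
  bilinear_for *:%R *:%R B.

Definition is_trilinear (U V X W : lmodType k) (T : U -> V -> X -> W) :=
  [/\ forall v x, linear (fun u => T u v x), forall u x, linear (fun v => T u v x)
    & forall u v, linear (T u v)].

Lemma teq2_bilinear_sum (U V W : lmodType k) (B : U -> V -> W) (s t : seq (U * V)) :
  is_bilinear B -> teq2 s t -> \sum_(p <- s) B p.1 p.2 = \sum_(p <- t) B p.1 p.2.
Proof.
move=> [B1 B2]; apply: (fcong_big (F := fun p : U * V => B p.1 p.2)).
move=> s' t' [] * /=; rewrite ?big_cons ?big_nil /= ?addr0.
- exact: linear_forD (B1 _) _ _.
- exact: linear_forD (B2 _) _ _.
- by rewrite (linear_forZ (B1 _)) (linear_forZ (B2 _)).
- exact: linear_for0 (B1 _).
Qed.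

Lemma teq3_trilinear_sum (U V X W : lmodType k) (T : U -> V -> X -> W)
    (s t : seq (U * V * X)) :
  is_trilinear T -> teq3 s t ->
  \sum_(p <- s) T p.1.1 p.1.2 p.2 = \sum_(p <- t) T p.1.1 p.1.2 p.2.
Proof.
move=> [T1 T2 T3]; apply: (fcong_big (F := fun p : U * V * X => T p.1.1 p.1.2 p.2)).
move=> s' t' [] * /=; rewrite ?big_cons ?big_nil /= ?addr0.
- exact: linear_forD (T1 _ _) _ _.
- exact: linear_forD (T2 _ _) _ _.
- exact: linear_forD (T3 _ _) _ _.
- by rewrite (linear_forZ (T1 _ _)) (linear_forZ (T2 _ _)).
- by rewrite (linear_forZ (T2 _ _)) (linear_forZ (T3 _ _)).
- exact: linear_for0 (T1 _ _).
Qed.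

Lemma linear_comp (X Y W : lmodType k) (F : Y -> W) (G : X -> Y) :
  linear F -> linear G -> linear (fun x => F (G x)).
Proof. by move=> linF linG c x y; rewrite linG linF. Qed.

Lemma linear_mulr (A : algType k) (a : A) : linear (fun x : A => x * a).
Proof. by move=> c x y; rewrite mulrDl scalerAl. Qed.

Lemma linear_mull (A : algType k) (a : A) : linear (fun x : A => a * x).
Proof. by move=> c x y; rewrite mulrDr scalerAr. Qed.

Lemma linear_scale_fun (X W : lmodType k) (F : X -> W) (a : k) :
  linear F -> linear (fun x => a *: F x).
Proof. by move=> linF c x y; rewrite linF scalerDr !scalerA mulrC. Qed.

Lemma linear_functional_scale (X W : lmodType k) (f : X -> k) (w : W) :
  klinear f -> linear (fun x => f x *: w).
Proof. by move=> linf c x y; rewrite linf scalerDl scalerA. Qed.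

Lemma linear_sum_fun (X W : lmodType k) (I : Type) (r : seq I) (F : I -> X -> W) :
  (forall i, linear (F i)) -> linear (fun x => \sum_(i <- r) F i x).
Proof.
move=> linF c x y; rewrite scaler_sumr -big_split /=.
by apply: eq_bigr => i _; rewrite linF.
Qed.

Lemma bilinear_mulr (A : algType k) (W : lmodType k) (B : A -> A -> W) (m n : A) :
  is_bilinear B -> is_bilinear (fun u v => B (u * m) (v * n)).
Proof.
move=> [B1 B2]; split=> [v|u].
  exact: linear_comp (B1 _) (linear_mulr _).
exact: linear_comp (B2 _) (linear_mulr _).
Qed.

Lemma bilinear_functional_scale (U V : lmodType k) (f : U -> k) :
  klinear f -> is_bilinear (fun (u : U) (v : V) => f u *: v).
Proof.
move=> linf; split=> [v|u]; first exact: linear_functional_scale.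
exact: linear_scale_fun (fun c x y => erefl).
Qed.

Lemma bilinear_functional_mul (U V : lmodType k) (f : U -> k) (g : V -> k) :
  klinear f -> klinear g -> is_bilinear (fun u v => f u * g v : k^o).
Proof.
move=> linf ling; split=> [v|u] c x y /=.
  by rewrite linf mulrDl -mulrA.
by rewrite ling mulrDr mulrCA.
Qed.

Lemma linear_tsum (X U V W : lmodType k) (f : X -> seq (U * V)) (B : U -> V -> W) :
  tlinear f -> is_bilinear B -> linear (fun x => \sum_(p <- f x) B p.1 p.2).
Proof.
move=> linf bilB c x y; rewrite (teq2_bilinear_sum bilB (linf c x y)) big_cat big_map.
congr (_ + _); rewrite scaler_sumr; apply: eq_bigr => p _.
by rewrite (linear_forZ (bilB.1 _)).
Qed.

Lemma tmultiplicative_tsum (X U V : algType k) (W : lmodType k)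
    (f : X -> seq (U * V)) (B : U -> V -> W) :
  tmultiplicative f -> is_bilinear B ->
  (forall x y, \sum_(p <- f (x * y)) B p.1 p.2 =
     \sum_(p <- f x) \sum_(q <- f y) B (p.1 * q.1) (p.2 * q.2)) /\
  \sum_(p <- f 1) B p.1 p.2 = B 1 1.
Proof.
move=> [fM f1] bilB; split=> [x y|].
  by rewrite (teq2_bilinear_sum bilB (fM x y)) big_allpairs_dep.
by rewrite (teq2_bilinear_sum bilB f1) big_cons big_nil addr0.
Qed.

Lemma coassoc_tsum (A Z : algType k) (W : lmodType k) (Delta : A -> seq (A * A))
    (alpha : Z -> seq (A * Z)) (T : A -> A -> Z -> W) (z : Z) :
  is_trilinear T ->
  teq3 [seq (q.1, q.2, p.2) | p <- alpha z, q <- Delta p.1]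
       [seq (p.1, q.1, q.2) | p <- alpha z, q <- alpha p.2] ->
  \sum_(p <- alpha z) \sum_(q <- Delta p.1) T q.1 q.2 p.2 =
  \sum_(p <- alpha z) \sum_(q <- alpha p.2) T p.1 q.1 q.2.
Proof. by move=> trilT /(teq3_trilinear_sum trilT); rewrite !big_allpairs_dep. Qed.

End Multilinear.

Section TensorCalculus.
Variable k : fieldType.

Definition tscale (U V : lmodType k) (c : k) (s : seq (U * V)) :=
  [seq (c *: p.1, p.2) | p <- s].

Lemma teq2_mulr (U : lmodType k) (Z : algType k) (y : Z) (s t : seq (U * Z)) :
  teq2 s t -> teq2 [seq (p.1, p.2 * y) | p <- s] [seq (p.1, p.2 * y) | p <- t].
Proof.
apply: fcong_map => s' t' [] /=.
- by move=> u u' v; apply: fc_gen; apply: t2_addl.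
- by move=> u v v'; rewrite mulrDl; apply: fc_gen; apply: t2_addr.
- by move=> d u v; rewrite -scalerAl; apply: fc_gen; apply: t2_scale.
- by move=> v; apply: fc_gen; apply: t2_zero.
Qed.

Lemma teq2_tscaleN1 (U V : lmodType k) (s : seq (U * V)) :
  teq2 (tscale (-1) s ++ s) [::].
Proof.
elim: s => [|[u v] s IHs] /=; first exact: fc_refl.
apply: fc_trans (fcong_cons _ (fc_comm _ _ _)) _.
apply: (@fc_cat _ _ [:: _; (u, v)] [::] _ [::]); last exact: fc_trans (fc_comm _ _ _) IHs.
apply: fc_trans (_ : teq2 [:: ((-1) *: u + u, v)] _).
  by apply: fc_sym; apply: fc_gen; apply: t2_addl.
by rewrite scaleN1r addNr; apply: fc_gen; apply: t2_zero.
Qed.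

Lemma teq2_suml (U V : lmodType k) (I : Type) (r : seq I) (g : I -> U) (v : V) :
  teq2 [seq (g i, v) | i <- r] [:: (\sum_(i <- r) g i, v)].
Proof.
elim: r => [|i r IHr] /=.
  by rewrite big_nil; apply: fc_sym; apply: fc_gen; apply: t2_zero.
rewrite big_cons; apply: fc_trans (fcong_cons _ IHr) _.
by apply: fc_sym; apply: fc_gen; apply: t2_addl.
Qed.

Lemma teq2_sumr (U V : lmodType k) (I : Type) (r : seq I) (u : U) (g : I -> V) :
  teq2 [seq (u, g i) | i <- r] [:: (u, \sum_(i <- r) g i)].
Proof.
elim: r => [|i r IHr] /=.
  have u0 : teq2 [:: (0 *: u, (0 : V))] [:: (u, 0 *: (0 : V))].
    by apply: fc_gen; apply: t2_scale.
  rewrite big_nil scale0r scaler0 in u0 *.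
  apply: fc_sym; apply: fc_trans (fc_sym u0) _; apply: fc_gen; apply: t2_zero.
rewrite big_cons; apply: fc_trans (fcong_cons _ IHr) _.
by apply: fc_sym; apply: fc_gen; apply: t2_addr.
Qed.

Lemma teq3_contract (U V X : lmodType k) (f : U -> k) (s t : seq (U * V * X)) :
  klinear f -> teq3 s t ->
  teq2 [seq (f p.1.1 *: p.1.2, p.2) | p <- s] [seq (f p.1.1 *: p.1.2, p.2) | p <- t].
Proof.
move=> linf; apply: fcong_map => s' t' [] /=.
- by move=> u u' v w; rewrite (linear_forD linf) scalerDl; apply: fc_gen; apply: t2_addl.
- by move=> u v v' w; rewrite scalerDr; apply: fc_gen; apply: t2_addl.
- by move=> u v w w'; apply: fc_gen; apply: t2_addr.
- by move=> c u v w; rewrite (linear_forZ linf) scalerA mulrC; apply: fc_refl.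
- by move=> c u v w; rewrite scalerA mulrC -scalerA; apply: fc_gen; apply: t2_scale.
- by move=> v w; rewrite (linear_for0 linf) scale0r; apply: fc_gen; apply: t2_zero.
Qed.

Section TLinear.
Variables (X U V : lmodType k) (f : X -> seq (U * V)).
Hypothesis linf : tlinear f.

Lemma tlinear0 : teq2 (f 0) [::].
Proof.
have := linf (-1) 0 0; rewrite scaler0 addr0 => f0.
exact: fc_trans f0 (teq2_tscaleN1 _).
Qed.

Lemma tlinearZ c x : teq2 (f (c *: x)) (tscale c (f x)).
Proof.
have := linf c x 0; rewrite addr0 => fZ; apply: fc_trans fZ _.
by rewrite -[tscale c (f x)]cats0; apply: fc_cat; [apply: fc_refl | apply: tlinear0].
Qed.

Lemma tlinear_sum (I : Type) (r : seq I) (G : I -> X) :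
  teq2 (f (\sum_(i <- r) G i)) (flatten [seq f (G i) | i <- r]).
Proof.
elim: r => [|i r IHr] /=; first by rewrite big_nil; apply: tlinear0.
rewrite big_cons; have := linf 1 (G i) (\sum_(j <- r) G j).
rewrite scale1r => fD; apply: fc_trans fD _; apply: fc_cat => //.
rewrite [X in fcong _ X _](_ : _ = f (G i)); first exact: fc_refl.
by rewrite -[RHS]map_id; apply: eq_map => -[u v]; rewrite /= scale1r.
Qed.

End TLinear.
End TensorCalculus.

Section HopfAlgebra.
Variables (k : fieldType) (A : algType k) (Delta : A -> seq (A * A)).
Variables (eps : A -> k) (S : A -> A).
Hypothesis hopfA : is_hopf_algebra Delta eps S.

Lemma comul_tlinear : tlinear Delta. Proof. by case: hopfA. Qed.
Lemma comul_tmultiplicative : tmultiplicative Delta. Proof. by case: hopfA => _ []. Qed.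
Lemma comul_coassoc a :
  teq3 [seq (q.1, q.2, p.2) | p <- Delta a, q <- Delta p.1]
       [seq (p.1, q.1, q.2) | p <- Delta a, q <- Delta p.2].
Proof. by case: hopfA => _ [] _ []. Qed.
Lemma counit1 : eps 1 = 1. Proof. by case: hopfA => _ [_ [_ [[_ [_ ->]] _]]]. Qed.
Lemma counitl a : \sum_(p <- Delta a) eps p.1 *: p.2 = a.
Proof. by case: hopfA => _ [] _ [] _ [] _ [] /(_ a) []. Qed.
Lemma counitr a : \sum_(p <- Delta a) eps p.2 *: p.1 = a.
Proof. by case: hopfA => _ [] _ [] _ [] _ [] /(_ a) []. Qed.
Lemma antipode_linear : linear S. Proof. by case: hopfA => _ [] _ [] _ [] _ [] _ []. Qed.
Lemma antipodel a : \sum_(p <- Delta a) S p.1 * p.2 = eps a *: 1.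
Proof. by case: hopfA => _ [] _ [] _ [] _ [] _ [] _ /(_ a) []. Qed.
Lemma antipoder a : \sum_(p <- Delta a) p.1 * S p.2 = eps a *: 1.
Proof. by case: hopfA => _ [] _ [] _ [] _ [] _ [] _ /(_ a) []. Qed.

Lemma linear_comul_sum (W : lmodType k) (B : A -> A -> W) :
  is_bilinear B -> linear (fun a => \sum_(p <- Delta a) B p.1 p.2).
Proof. exact: linear_tsum comul_tlinear. Qed.

Lemma comul_coassoc_sum (W : lmodType k) (T : A -> A -> A -> W) a :
  is_trilinear T ->
  \sum_(p <- Delta a) \sum_(q <- Delta p.1) T q.1 q.2 p.2 =
  \sum_(p <- Delta a) \sum_(q <- Delta p.2) T p.1 q.1 q.2.
Proof. by move=> trilT; apply: coassoc_tsum trilT (comul_coassoc a). Qed.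

Section LinearImage.
Variables (W : lmodType k) (L : A -> W).
Hypothesis linL : linear L.

Lemma counitl_linear a : \sum_(p <- Delta a) eps p.1 *: L p.2 = L a.
Proof.
rewrite -{2}(counitl a) (linear_for_sum linL).
by apply: eq_bigr => p _; rewrite (linear_forZ linL).
Qed.

Lemma counitr_linear a : \sum_(p <- Delta a) eps p.2 *: L p.1 = L a.
Proof.
rewrite -{2}(counitr a) (linear_for_sum linL).
by apply: eq_bigr => p _; rewrite (linear_forZ linL).
Qed.

Lemma antipodel_linear a : \sum_(p <- Delta a) L (S p.1 * p.2) = eps a *: L 1.
Proof. by rewrite -(linear_forZ linL) -antipodel (linear_for_sum linL). Qed.

Lemma antipoder_linear a : \sum_(p <- Delta a) L (p.1 * S p.2) = eps a *: L 1.
Proof. by rewrite -(linear_forZ linL) -antipoder (linear_for_sum linL). Qed.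

End LinearImage.

Lemma linear_antipode_mull (a : A) : linear (fun x => a * S x).
Proof. exact: linear_comp (linear_mull a) antipode_linear. Qed.

Lemma comul_mul_antipode_flip (W : lmodType k) (C : A -> A -> W) : is_bilinear C ->
  forall y, \sum_(r <- Delta y) \sum_(s <- Delta r.1) \sum_(t <- Delta r.2)
     C (s.1 * S t.2) (s.2 * S t.1) = eps y *: C 1 1.
Proof.
move=> bilC y; have [C1 C2] := bilC.
pose T (a b c : A) := \sum_(s <- Delta a) C (s.1 * S c) (s.2 * S b).
have trilT : is_trilinear T.
  split=> [b c|a c|a b]; first exact: linear_comul_sum (bilinear_mulr _ _ bilC).
    by apply: linear_sum_fun => s; apply: linear_comp (C2 _) (linear_antipode_mull _).
  by apply: linear_sum_fun => s; apply: linear_comp (C1 _) (linear_antipode_mull _).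
have inner r : \sum_(s <- Delta r.1) T s.1 s.2 r.2 = C (r.1 * S r.2) 1.
  pose T' (a b c : A) := C (a * S r.2) (b * S c).
  have trilT' : is_trilinear T'.
    split=> [b c|a c|a b]; first exact: linear_comp (C1 _) (linear_mulr _).
      exact: linear_comp (C2 _) (linear_mulr _).
    exact: linear_comp (C2 _) (linear_antipode_mull _).
  rewrite (comul_coassoc_sum _ trilT') /T'.
  under eq_bigr do rewrite (antipoder_linear (C2 _)).
  exact: counitr_linear (linear_comp (C1 1) (linear_mulr _)) _.
under eq_bigr do rewrite exchange_big /=.
rewrite -(comul_coassoc_sum _ trilT).
under eq_bigr do rewrite inner.
exact: antipoder_linear (C1 1) _.
Qed.

Lemma antipode_comul_convolution (W : lmodType k) (E : A -> A -> W) : is_bilinear E ->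
  forall x, \sum_(r <- Delta x) \sum_(q <- Delta (S r.1)) \sum_(s <- Delta r.2)
     E (q.1 * s.1) (q.2 * s.2) = eps x *: E 1 1.
Proof.
move=> bilE x; have [comulM comul1] := tmultiplicative_tsum comul_tmultiplicative bilE.
under eq_bigr do rewrite -comulM.
by rewrite (antipodel_linear (linear_comul_sum bilE)) comul1.
Qed.

Lemma comul_antipode (W : lmodType k) (B : A -> A -> W) : is_bilinear B ->
  forall x, \sum_(q <- Delta (S x)) B q.1 q.2 = \sum_(t <- Delta x) B (S t.2) (S t.1).
Proof.
move=> bilB x; have [B1 B2] := bilB.
pose G a := \sum_(q <- Delta (S a)) B q.1 q.2.
have linG : linear G := linear_comp (linear_comul_sum bilB) antipode_linear.
pose H a := \sum_(t <- Delta a) B (S t.2) (S t.1).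
have linH : linear H.
  apply: (linear_comul_sum (B := fun u v => B (S v) (S u))); split=> [v|u].
    exact: linear_comp (B2 _) antipode_linear.
  exact: linear_comp (B1 _) antipode_linear.
pose C a u v := \sum_(q <- Delta (S a)) B (q.1 * u) (q.2 * v).
have bilC a : is_bilinear (C a).
  split=> [v|u]; apply: linear_sum_fun => q.
    exact: linear_comp (B1 _) (linear_mull _).
  exact: linear_comp (B2 _) (linear_mull _).
pose T a b c := \sum_(s <- Delta b) \sum_(t <- Delta c) C a (s.1 * S t.2) (s.2 * S t.1).
have trilT : is_trilinear T.
  split=> [b c|a c|a b].
  - apply: linear_sum_fun => s; apply: linear_sum_fun => t.
    exact: linear_comp (linear_comul_sum (bilinear_mulr _ _ bilB)) antipode_linear.
  - apply: (linear_comul_sum (B := fun u v => \sum_(t <- Delta c)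
      C a (u * S t.2) (v * S t.1))); split=> [v|u]; apply: linear_sum_fun => t.
      exact: (bilinear_mulr _ _ (bilC a)).1.
    exact: (bilinear_mulr _ _ (bilC a)).2.
  - apply: linear_sum_fun => s.
    apply: (linear_comul_sum (B := fun u v => C a (s.1 * S v) (s.2 * S u))).
    split=> [v|u]; first exact: linear_comp ((bilC a).2 _) (linear_antipode_mull _).
    exact: linear_comp ((bilC a).1 _) (linear_antipode_mull _).
transitivity (\sum_(p <- Delta x) \sum_(r <- Delta p.2) T p.1 r.1 r.2).
  rewrite -[LHS](counitr_linear linG); apply: eq_bigr => p _.
  have -> : G p.1 = C p.1 1 1 by apply: eq_bigr => q _; rewrite !mulr1.
  by rewrite -(comul_mul_antipode_flip (bilC p.1)).
rewrite -(comul_coassoc_sum _ trilT) -[RHS](counitl_linear linH).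
apply: eq_bigr => p _; rewrite /H scaler_sumr.
transitivity (\sum_(t <- Delta p.2) \sum_(r <- Delta p.1) \sum_(q <- Delta (S r.1))
    \sum_(s <- Delta r.2) B (q.1 * s.1 * S t.2) (q.2 * s.2 * S t.1)).
  rewrite /T /C; under eq_bigr do rewrite exchange_big /=.
  rewrite exchange_big /=; apply: eq_bigr => t _; apply: eq_bigr => r _.
  rewrite exchange_big /=; apply: eq_bigr => q _; apply: eq_bigr => s _.
  by rewrite !mulrA.
apply: eq_bigr => t _.
by rewrite (antipode_comul_convolution (bilinear_mulr _ _ bilB)) !mul1r.
Qed.

Lemma antipode1 : S 1 = 1.
Proof.
have bilB : is_bilinear (fun u v : A => S u * v).
  split=> [v|u]; last exact: linear_mull.
  exact: linear_comp (linear_mulr v) antipode_linear.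
have [_ comul1] := tmultiplicative_tsum comul_tmultiplicative bilB.
by rewrite -[LHS]mulr1 -comul1 antipodel counit1 scale1r.
Qed.

Section RightIntegral.
Variable J : A -> k.
Hypothesis haarJ : is_haar_measure Delta J.

Lemma haar_linear : klinear J. Proof. by case: haarJ. Qed.

Lemma haar_antipode_linear : klinear (fun x => J (S x)).
Proof. by move=> c x y; rewrite antipode_linear haar_linear. Qed.

Lemma haar_antipode1 : J (S 1) = 1.
Proof. by rewrite antipode1; case: haarJ. Qed.

Lemma haar_antipode_right_invariant a :
  \sum_(p <- Delta a) J (S p.1) *: p.2 = J (S a) *: 1.
Proof.
have [_ leftJ _] := haarJ.
have leftJS x : \sum_(q <- Delta x) J (S q.1) *: S q.2 = J (S x) *: 1.
  rewrite -leftJ (comul_antipode (B := fun u v => J v *: u)) //.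
  by split=> [v|u]; [exact: linear_scale_fun | exact: linear_functional_scale haar_linear].
pose T (a b c : A) := J (S a) *: (S b * c).
have trilT : is_trilinear T.
  split=> [b c|a' c|a' b].
  - exact: linear_functional_scale haar_antipode_linear.
  - exact/linear_scale_fun/(linear_comp (linear_mulr c) antipode_linear).
  - exact/linear_scale_fun/linear_mull.
transitivity (\sum_(p <- Delta a) \sum_(q <- Delta p.1) T q.1 q.2 p.2).
  apply: eq_bigr => p _; rewrite /T.
  under eq_bigr do rewrite scalerAl.
  by rewrite -mulr_suml leftJS -scalerAl mul1r.
rewrite (comul_coassoc_sum _ trilT) /T.
under eq_bigr do rewrite -scaler_sumr antipodel scalerA mulrC -scalerA.
by rewrite -(counitr_linear (linear_functional_scale 1 haar_antipode_linear)).
Qed.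

End RightIntegral.

End HopfAlgebra.

Section GaloisExtension.
Variables (k : fieldType) (A : algType k) (Delta : A -> seq (A * A)).
Variables (eps : A -> k) (S : A -> A) (J : A -> k).
Variables (Z : algType k) (alpha : Z -> seq (A * Z)).
Hypothesis hopfA : is_hopf_algebra Delta eps S.
Hypothesis haarJ : is_haar_measure Delta J.
Hypothesis galZ : is_galois_extension Delta eps alpha.

Lemma coaction_tlinear : tlinear alpha. Proof. by case: galZ => _ []. Qed.
Lemma coaction_tmultiplicative : tmultiplicative alpha. Proof. by case: galZ => _ []. Qed.
Lemma coaction_coassoc z :
  teq3 [seq (q.1, q.2, p.2) | p <- alpha z, q <- Delta p.1]
       [seq (p.1, q.1, q.2) | p <- alpha z, q <- alpha p.2].
Proof. by case: galZ => _ []. Qed.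
Lemma galois_map_inj s t :
  teq2 (galois_map alpha s) (galois_map alpha t) -> teq2 s t.
Proof. by case: galZ => _ _ /(_ s t). Qed.

Lemma coaction_coassoc_sum (W : lmodType k) (T : A -> A -> Z -> W) z :
  is_trilinear T ->
  \sum_(p <- alpha z) \sum_(q <- Delta p.1) T q.1 q.2 p.2 =
  \sum_(p <- alpha z) \sum_(q <- alpha p.2) T p.1 q.1 q.2.
Proof. by move=> trilT; apply: coassoc_tsum trilT (coaction_coassoc z). Qed.

Definition coinv_proj z := \sum_(p <- alpha z) J (S p.1) *: p.2.

Lemma haar_coinv_proj mu : is_haar_measure alpha mu -> forall z, mu (coinv_proj z) = mu z.
Proof.
move=> [linmu leftmu mu1] z; have linJS := haar_antipode_linear hopfA haarJ.
rewrite /coinv_proj (linear_for_sum linmu).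
under eq_bigr do rewrite (klinearZ linmu) mulrC -(klinearZ linJS).
rewrite -(linear_for_sum linJS) leftmu (klinearZ linJS).
by rewrite (haar_antipode1 hopfA haarJ) mulr1.
Qed.

Lemma coinv_proj_coinvariant z : teq2 (alpha (coinv_proj z)) [:: (1, coinv_proj z)].
Proof.
have linJS := haar_antipode_linear hopfA haarJ.
apply: fc_trans (tlinear_sum coaction_tlinear _ _) _.
apply: fc_trans (_ : teq2 (flatten [seq tscale (J (S p.1)) (alpha p.2) | p <- alpha z]) _).
  by apply: fcong_flatten => p; apply: (tlinearZ coaction_tlinear).
apply: fc_trans (_ : teq2 (flatten [seq [seq (J (S q.1) *: q.2, p.2) | q <- Delta p.1]
  | p <- alpha z]) _).
  have := teq3_contract linJS (coaction_coassoc z).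
  by rewrite !map_allpairs /=; apply: fc_sym.
apply: fc_trans (_ : teq2 (flatten [seq [:: (J (S p.1) *: 1, p.2)] | p <- alpha z]) _).
  apply: fcong_flatten => p; rewrite -(haar_antipode_right_invariant hopfA haarJ).
  exact: teq2_suml.
apply: fc_trans (_ : teq2 (flatten [seq [:: (1, J (S p.1) *: p.2)] | p <- alpha z]) _).
  by apply: fcong_flatten => p; apply: fc_gen; apply: t2_scale.
by rewrite flatten_map1; apply: teq2_sumr.
Qed.

Lemma coinvariant_tensor_swap y :
  teq2 (alpha y) [:: (1, y)] -> teq2 [:: (y, 1)] [:: (1, y)].
Proof.
move=> coinv_y; apply: galois_map_inj; rewrite /galois_map /= !cats0.
rewrite [X in teq2 X _](_ : _ = alpha y); last first.
  by rewrite -[RHS]map_id; apply: eq_map => -[u v]; rewrite /= mulr1.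
apply: fc_trans coinv_y _; apply: fc_sym.
by have := teq2_mulr y coaction_tmultiplicative.2; rewrite /= mul1r.
Qed.

Lemma haar_uniq mu nu : is_haar_measure alpha mu -> is_haar_measure alpha nu ->
  mu =1 nu.
Proof.
move=> haarmu haarnu z; rewrite -(haar_coinv_proj haarmu) -(haar_coinv_proj haarnu).
have swap := coinvariant_tensor_swap (coinv_proj_coinvariant z).
case: haarmu haarnu => [linmu _ mu1] [linnu _ nu1].
have := teq2_bilinear_sum (bilinear_functional_mul linmu linnu) swap.
by rewrite !big_seq1 /= mu1 nu1 mulr1 mul1r.
Qed.

Definition haar_avg z := \sum_(p <- alpha z) J p.1 *: p.2.

Lemma haar_avg_haar (f : Z -> k) : klinear f -> f 1 = 1 ->
  is_haar_measure alpha (fun z => f (haar_avg z)).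
Proof.
move=> linf f1; have [linJ leftJ J1] := haarJ.
have bilJ : is_bilinear (fun (u : A) (v : Z) => J u *: v).
  exact: bilinear_functional_scale.
split.
- have linavg : linear haar_avg := linear_tsum coaction_tlinear bilJ.
  by move=> c x y; rewrite linavg linf.
- move=> z; pose T (a b : A) (c : Z) := (J b * f c) *: a.
  have trilT : is_trilinear T.
    have bilJf := bilinear_functional_mul linJ linf.
    split=> [b c|a c|a b]; first exact: linear_scale_fun (fun c x y => erefl).
      exact: linear_functional_scale (bilJf.1 c).
    exact: linear_functional_scale (bilJf.2 b).
  transitivity (\sum_(p <- alpha z) \sum_(q <- alpha p.2) T p.1 q.1 q.2).
    apply: eq_bigr => p _; rewrite /haar_avg (linear_for_sum linf) scaler_suml.
    by apply: eq_bigr => q _; rewrite (klinearZ linf).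
  rewrite -(coaction_coassoc_sum _ trilT) /haar_avg (linear_for_sum linf) scaler_suml.
  apply: eq_bigr => p _; rewrite /T.
  under eq_bigr do rewrite mulrC -scalerA.
  by rewrite -scaler_sumr leftJ (klinearZ linf) scalerA mulrC.
- have [_ avg1] := tmultiplicative_tsum coaction_tmultiplicative bilJ.
  by rewrite /haar_avg avg1 J1 scale1r.
Qed.

End GaloisExtension.

Section LinearFunctional.
Local Open Scope classical_set_scope.
Variables (k : fieldType) (Z : lmodType k) (e : Z).

Definition subspace_avoiding (M : set Z) :=
  [/\ forall x y, M x -> M y -> M (x + y), forall c x, M x -> M (c *: x) & ~ M e].

Lemma exists_maximal_subspace_avoiding :
  exists M, subspace_avoiding M /\ forall B, M `<` B -> ~ subspace_avoiding B.
Proof.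
apply: Zorn_bigcup => F avoidF totF; split.
- move=> x y [X FX Xx] [Y FY Yy].
  have [XY|YX] := totF X Y FX FY.
    by exists Y => //; have [+ _ _] := avoidF Y FY; apply => //; apply: XY.
  by exists X => //; have [+ _ _] := avoidF X FX; apply => //; apply: YX.
- by move=> c x [X FX Xx]; exists X => //; have [_ + _] := avoidF X FX; apply.
- by move=> [X FX Xe]; have [_ _] := avoidF X FX; apply.
Qed.

Lemma subspace_avoiding_coord_uniq M z c d : subspace_avoiding M ->
  M (z - c *: e) -> M (z - d *: e) -> c = d.
Proof.
move=> [MD MZ Me] Mc Md; have [//|cd] := eqVneq c d; exfalso.
have dc : d - c != 0 by rewrite subr_eq0 eq_sym.
have Mdc : M ((d - c) *: e).
  have -> : (d - c) *: e = (z - c *: e) + (-1) *: (z - d *: e).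
    by rewrite scaleN1r opprB scalerBl [RHS]addrC addrA subrK.
  by apply: MD => //; apply: MZ.
by apply: Me; have := MZ (d - c)^-1 _ Mdc; rewrite scalerA mulVf // scale1r.
Qed.

Section Maximal.
Variable M : set Z.
Hypothesis avoidM : subspace_avoiding M.
Hypothesis maxM : forall B, M `<` B -> ~ subspace_avoiding B.
Hypothesis e_neq0 : e != 0.

Lemma maximal_avoiding0 : M 0.
Proof.
have [MD MZ Me] := avoidM; apply: contrapT => notM0.
apply: (maxM (B := M `|` [set 0])).
  split; first by move=> x Mx; left.
  by move=> M0; apply: notM0; apply: M0; right.
split.
- move=> x y [Mx|->] [My|->]; rewrite ?addr0 ?add0r; try by left.
    by left; apply: MD.
  by right.
- by move=> c x [Mx|->]; [left; apply: MZ | right; rewrite scaler0].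
- by move=> [//|/eqP]; rewrite (negbTE e_neq0).
Qed.

Lemma maximal_avoiding_decomp z : exists c, M (z - c *: e).
Proof.
have [MD MZ Me] := avoidM; apply: contrapT => nodecomp.
have notM c : ~ M (z - c *: e) by move=> Mc; apply: nodecomp; exists c.
pose B := [set x | exists m c, M m /\ x = m + c *: z].
apply: (maxM (B := B)).
  split; first by move=> x Mx; exists x, 0; rewrite scale0r addr0.
  move=> BM; apply: (notM 0); rewrite scale0r subr0; apply: BM.
  by exists 0, 1; rewrite scale1r add0r; split => //; apply: maximal_avoiding0.
split.
- move=> x y [m1 [c1 [M1 ->]]] [m2 [c2 [M2 ->]]].
  exists (m1 + m2), (c1 + c2); split; first exact: MD.
  by rewrite scalerDl addrACA.
- move=> c x [m [d [Mm ->]]]; exists (c *: m), (c * d); split; first exact: MZ.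
  by rewrite scalerDr scalerA.
- move=> [m [c [Mm em]]].
  have [c0|c_neq0] := eqVneq c 0.
    by apply: Me; rewrite em c0 scale0r addr0.
  apply: (notM c^-1).
  have -> : z - c^-1 *: e = (- c^-1) *: m.
    rewrite em scalerDr scalerA mulVf // scale1r scaleNr.
    by rewrite opprD addrCA subrr addr0.
  exact: MZ.
Qed.

End Maximal.

Lemma exists_functional : e != 0 -> exists f : Z -> k, klinear f /\ f e = 1.
Proof.
move=> e_neq0; have [M [avoidM maxM]] := exists_maximal_subspace_avoiding.
have [MD MZ _] := avoidM.
have decomp z := maximal_avoiding_decomp avoidM maxM e_neq0 z.
pose f z := projT1 (cid (decomp z)).
have fP z : M (z - f z *: e) := projT2 (cid (decomp z)).
exists f; split.
  move=> c x y; apply: (subspace_avoiding_coord_uniq avoidM (fP _)).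
  have -> : c *: x + y - (c * f x + f y) *: e = c *: (x - f x *: e) + (y - f y *: e).
    by rewrite scalerDl -scalerA scalerBr opprD addrACA.
  by apply: MD => //; apply: MZ.
apply: (subspace_avoiding_coord_uniq avoidM (fP e)).
by rewrite scale1r subrr; apply: maximal_avoiding0.
Qed.

End LinearFunctional.

Theorem proposition4p2p2 (k : fieldType) (A : algType k)
    (Delta : A -> seq (A * A)) (eps : A -> k) (S : A -> A) :
  is_hopf_algebra Delta eps S ->
  (exists J : A -> k, is_haar_measure Delta J) ->
  forall (Z : algType k) (alpha : Z -> seq (A * Z)),
    is_galois_extension Delta eps alpha ->
    exists! mu : Z -> k, is_haar_measure alpha mu.
Proof.
move=> hopfA [J haarJ] Z alpha galZ.
have [f [linf f1]] := exists_functional (oner_neq0 Z).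
have haar_mu := haar_avg_haar haarJ galZ linf f1.
exists (fun z => f (haar_avg J alpha z)); split=> // nu haar_nu.
by apply/funext/(haar_uniq hopfA haarJ galZ).
Qed.
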